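(* For any vector field $X$ on $M$, $$\tau\big(\Phi(X), \nabla^{E'}_X\Phi'(X)\big) = -\tfrac{1}{2}D_M[X|XX],\qquad \tau\big(\Phi(X), \nabla^{E'}_X\nabla^{E'}_X\Phi'(X)\big) = -\tfrac{1}{2}D_M[X|XXX].$$
   Context: Let $\mathbb{R}^{2n+1}$ have coordinates $(\mathbf{x},\mathbf{p},z)$ and contact form $\theta=dz-\sum_ip_i\,dx_i$. A quasi-Hessian manifold $M$ is obtained by gluing Legendre submanifolds $L\subset\mathbb{R}^{2n+1}$ (local models) via affine Legendre equivalences. On each local model, $\pi^e:(\mathbf{x},\mathbf{p},z)\mapsto(\mathbf{x},z)$ and $\pi^m:(\mathbf{x},\mathbf{p},z)\mapsto(\mathbf{p},z')$ with $z'=\mathbf{p}^T\mathbf{x}-z$; $E=\{(q,w):dz(w)-\mathbf{p}(q)^Td\mathbf{x}(w)=0\}\subset L\times(\mathbb{R}^n_{\mathbf{x}}\times\mathbb{R}_z)$ with $\Phi=d\pi^e:TL\to E$ and flat connection $\nabla^E$ (flat frame $s_i=\partial/\partial x_i+p_i\,\partial/\partial z$), and analogously $E'$ with $\Phi'=d\pi^m$ and flat connection $\nabla^{E'}$ (flat frame $s_i^*=\partial/\partial p_i+x_i\,\partial/\partial z'$); these glue to bundles on $M$. $\tau=\sum_i dx_i\,dp_i$ (symmetrized), $\tau(s_i,s_j^* )=\tfrac12\delta_{ij}$, and $\tau(\eta,\zeta')$ means $\tau(\eta\oplus0,0\oplus\zeta')$. The canonical divergence on a local model is $D(p,q)=z(p)+z'(q)-\mathbf{x}(p)^T\mathbf{p}(q)$;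 it is invariant under affine Legendre equivalences and defines $D_M:M\times M\to\mathbb{R}$ (locally). For a function $\rho$ on $M\times M$, $\rho[X_1\cdots X_k|Y_1\cdots Y_l](r)=(X_1)_p\cdots(X_k)_p(Y_1)_q\cdots(Y_l)_q\,\rho(p,q)\big|_{p=q=r}$. *)

(* MathComp + MathComp-Analysis, over an abstract R : realType.
   Local-model (chart) formalization of a quasi-Hessian manifold. *)
From HB Require Import structures.
From mathcomp Require Import all_boot all_order all_algebra.
From mathcomp Require Import all_classical all_reals all_analysis.
Set Implicit Arguments. Unset Strict Implicit. Unset Printing Implicit Defensive.
Import Order.TTheory GRing.Theory Num.Theory.
Import numFieldNormedType.Exports.
Local Open Scope classical_set_scope.
Local Open Scope ring_scope.

Section QH.
Variables (R : realType) (n : nat).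

Definition vfield := 'rV[R]_n -> 'rV[R]_n.

Fixpoint Ck {V : normedModType R} (U : set 'rV[R]_n) (k : nat) (f : 'rV[R]_n -> V) : Prop :=
  match k with
  | 0 => {in U, continuous f}
  | k'.+1 => (forall u, U u -> differentiable f u) /\
             (forall v : 'rV[R]_n, Ck U k' (fun u => 'D_v f u))
  end.
Definition smooth_on {V : normedModType R} (U : set 'rV[R]_n) (f : 'rV[R]_n -> V) :=
  forall k, Ck U k f.

Definition vact {V : normedModType R} (X : vfield) (f : 'rV[R]_n -> V) : 'rV[R]_n -> V :=
  fun u => 'D_(X u) f u.

Definition dotv (a b : 'rV[R]_n) : R := \sum_(i < n) a ord0 i * b ord0 i.

(* A local model: a Legendre submanifold L of R^(2n+1), given by a parametrization
   u |-> (x u, p u, z u) of an open set U of R^n (smooth immersion, theta pulls back to 0). *)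
Definition legendre_param (U : set 'rV[R]_n) (x p : 'rV[R]_n -> 'rV[R]_n)
    (z : 'rV[R]_n -> R) : Prop :=
  [/\ open U, smooth_on U x /\ smooth_on U p, smooth_on U z,
      (forall u, U u -> forall v : 'rV[R]_n, v != 0 ->
          ('D_v x u != 0) \/ ('D_v p u != 0)) &
      (* Legendre: dz - sum_i p_i dx_i = 0 on L *)
      (forall u, U u -> forall v : 'rV[R]_n, 'D_v z u = dotv (p u) ('D_v x u))].

Definition zdual (x p : 'rV[R]_n -> 'rV[R]_n) (z : 'rV[R]_n -> R) : 'rV[R]_n -> R :=
  fun u => dotv (p u) (x u) - z u.

(* Fibres of E and E' are represented as vectors of R^n x R:
   an element (w, c) of E_u  (in R^n_x x R_z) satisfies c = p(u)^T w,
   an element (w, c) of E'_u (in R^n_p x R_z') satisfies c = x(u)^T w. *)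
Definition section := 'rV[R]_n -> 'rV[R]_n * R.

(* Phi = d pi^e, Phi' = d pi^m applied to X *)
Definition PhiX (X : vfield) x (z : 'rV[R]_n -> R) : section :=
  fun u => (vact X x u, vact X z u).
Definition Phi'X (X : vfield) x p z : section :=
  fun u => (vact X p u, vact X (zdual x p z) u).

(* flat connection of E' : flat frame s_i^star = d/dp_i + x_i d/dz'; an element (w,c) of E'
   has coordinates w in this frame, so nabla_X (sum_i a_i s_i^star) = sum_i X(a_i) s_i^star *)
Definition nablaE' (x : 'rV[R]_n -> 'rV[R]_n) (X : vfield) (s : section) : section :=
  fun u => let a := vact X (fun v => (s v).1) u in (a, dotv (x u) a).

(* tau(eta, zeta') = tau(eta + 0, 0 + zeta') with tau = sum_i dx_i dp_i (symmetrized) *)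
Definition tau (eta zeta' : 'rV[R]_n * R) : R := 2^-1 * dotv eta.1 zeta'.1.

Definition Dcan x p z : 'rV[R]_n -> 'rV[R]_n -> R :=
  fun u v => z u + zdual x p z v - dotv (x u) (p v).

Definition D_X_XX (X : vfield) (D : 'rV[R]_n -> 'rV[R]_n -> R) : 'rV[R]_n -> R :=
  fun r => vact X (fun a => vact X (vact X (D a)) r) r.
Definition D_X_XXX (X : vfield) (D : 'rV[R]_n -> 'rV[R]_n -> R) : 'rV[R]_n -> R :=
  fun r => vact X (fun a => vact X (vact X (vact X (D a))) r) r.

End QH.

From HB Require Import structures.
From mathcomp Require Import all_boot all_order all_algebra.
From mathcomp Require Import all_classical all_reals all_analysis.
Set Implicit Arguments. Unset Strict Implicit. Unset Printing Implicit Defensive.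
Import Order.TTheory GRing.Theory Num.Theory.
Import numFieldNormedType.Exports.
Local Open Scope classical_set_scope.
Local Open Scope ring_scope.

(* In a chart, D(a, b) = z(a) + z'(b) - x(a)^T p(b) is, for fixed a, a constant
   plus z'(b) minus a fixed linear form applied to p(b).  Hence for k >= 1 the k-th
   derivative along X in b is X^k z'(b) - x(a)^T X^k p(b), and one more derivative
   along X in a, at a = b = r, leaves -(X x)(r)^T (X^k p)(r).  The flat connection of
   E' differentiates frame coordinates, i.e. the p-component, so the first component
   of the (k-1)-th covariant derivative of Phi'(X) is X^k p, and tau pairs it with
   X x with weight 1/2. *)

Section ScaleDerivative.
Context {R : numFieldType} {V W : normedModType R}.

Lemma scale_is_bilinear :
  bilinear_for
    (GRing.Scale.Law.clone _ _ *:%R _) (GRing.Scale.Law.clone _ _ *:%R _)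
    (@GRing.scale R V).
Proof.
split=> [u'|u] a x y /=.
- by rewrite scalerDl scalerA.
- by rewrite scalerDr !scalerA mulrC.
Qed.
HB.instance Definition _ :=
  bilinear_isBilinear.Build R R V V _ _ (@GRing.scale R V) scale_is_bilinear.

Let scale_pairE (a : W -> R) (f : W -> V) :
  (fun y => a y *: f y) = (fun q : R * V => q.1 *: q.2) \o (fun y => (a y, f y)).
Proof. by []. Qed.

Let differentiable_scale (q : R * V) :
  differentiable (fun q : R * V => q.1 *: q.2) q.
Proof.
by apply: (differentiable_bilin (f := @GRing.scale R V)) => ?; exact: scale_continuous.
Qed.

Lemma differentiable_scalef (a : W -> R) (f : W -> V) x :
  differentiable a x -> differentiable f x -> differentiable (fun y => a y *: f y) x.
Proof.
move=> da df; rewrite scale_pairE; apply: differentiable_comp => //.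
exact: differentiable_pair.
Qed.

Lemma derive_scalef (a : W -> R) (f : W -> V) x v :
  differentiable a x -> differentiable f x ->
  'D_v (fun y => a y *: f y) x = a x *: 'D_v f x + 'D_v a x *: f x.
Proof.
move=> da df; rewrite !deriveE //; last exact: differentiable_scalef.
rewrite scale_pairE diff_comp //; last exact: differentiable_pair.
rewrite /= (diff_bilin (f := @GRing.scale R V)) ?diff_pair // => ?.
exact: scale_continuous.
Qed.

End ScaleDerivative.

Lemma near_eq_differentiable {R : numFieldType} {V W : normedModType R}
    (f g : V -> W) u :
  {near u, f =1 g} -> differentiable f u -> differentiable g u.
Proof.
move=> fg df; have fgu : f u = g u := nbhs_singleton fg.
have /nbhs0P fg0 := fg.
have expand_g : g \o shift u = cst (g u) + 'd f u +o_ 0 id.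
  apply/eqaddoP => e e0; have /eqaddoP/(_ e e0) := diff_locally df.
  by apply: filterS2 fg0 => y fgy; rewrite !fctE -fgu /shift [y + u]addrC fgy.
have dg : 'd g u = 'd f u :> (V -> W).
  by apply: diff_unique; first exact: diff_continuous.
by apply/diff_locallyP; rewrite dg; split => //; exact: diff_continuous.
Qed.

Lemma derive_coord {R : numFieldType} {V : normedModType R} m n
    (g : V -> 'M[R]_(m, n)) i j u v :
  derivable g u v -> 'D_v (fun b => g b i j) u = 'D_v g u i j.
Proof.
move=> dg; apply: cvg_lim => //.
have := cvg_comp _ _ dg (@coord_continuous R m n i j ('D_v g u)).
by apply: cvg_trans; apply: near_eq_cvg; near=> h; rewrite /= !mxE.
Unshelve. all: by end_near. Qed.

Lemma differentiable_coordf {R : numFieldType} {V : normedModType R} m n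
    (g : V -> 'M[R]_(m, n)) i j u :
  differentiable g u -> differentiable (fun b => g b i j) u.
Proof.
move=> dg; apply: (differentiable_comp (g := fun M : 'M[R]_(m, n) => M i j)) => //.
exact: differentiable_coord.
Qed.

Section SmoothOnOpen.
Variables (R : realType) (n : nat) (U : set 'rV[R]_n).
Hypothesis openU : open U.
Local Notation E := 'rV[R]_n.

Lemma eq_on_open_near {T : Type} (f g : E -> T) u :
  (forall b, U b -> f b = g b) -> U u -> {near u, f =1 g}.
Proof. by move=> fg Uu; apply: (filterS fg); apply: open_nbhs_nbhs. Qed.

Lemma Ck_eq_on {V : normedModType R} k (f g : E -> V) :
  (forall b, U b -> f b = g b) -> Ck U k f -> Ck U k g.
Proof.
elim: k f g => [|k IH] f g fg /=.
- move=> cf u uU; have Uu := set_mem uU; rewrite /continuous_at -(fg u Uu).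
  by apply: cvg_trans (cf u uU); exact: near_eq_cvg (eq_on_open_near fg Uu).
- move=> [df dDf]; split=> [u Uu|v].
  + exact: near_eq_differentiable (eq_on_open_near fg Uu) (df u Uu).
  + by apply: IH (dDf v) => b Ub; apply: near_eq_derive; exact: eq_on_open_near.
Qed.

Lemma CkW {V : normedModType R} k (f : E -> V) : Ck U k.+1 f -> Ck U k f.
Proof.
elim: k f => [|k IH] f [df dDf] /=.
- by move=> u /set_mem Uu; exact/differentiable_continuous/df.
- by split=> // v; exact: IH (dDf v).
Qed.

Lemma Ck_cst {V : normedModType R} k (c : V) : Ck U k (fun _ => c).
Proof.
elim: k c => [|k IH] c /=; first by move=> u _; exact: cst_continuous.
split=> [u _|v]; first exact: differentiable_cst.
by apply: Ck_eq_on (IH 0) => b _; rewrite derive_cst.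
Qed.

Lemma CkD {V : normedModType R} k (f g : E -> V) :
  Ck U k f -> Ck U k g -> Ck U k (f + g).
Proof.
elim: k f g => [|k IH] f g /=.
- by move=> cf cg u uU; exact: continuousD (cf u uU) (cg u uU).
- move=> [df dDf] [dg dDg]; split=> [u Uu|v].
    exact: differentiableD (df u Uu) (dg u Uu).
  apply: Ck_eq_on (IH _ _ (dDf v) (dDg v)) => b Ub.
  by rewrite deriveD //; apply: diff_derivable; [exact: df | exact: dg].
Qed.

Lemma CkN {V : normedModType R} k (f : E -> V) : Ck U k f -> Ck U k (- f).
Proof.
elim: k f => [|k IH] f /=.
- by move=> cf u uU; exact: continuousN (cf u uU).
- move=> [df dDf]; split=> [u Uu|v]; first exact: differentiableN (df u Uu).
  apply: Ck_eq_on (IH _ (dDf v)) => b Ub.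
  by rewrite deriveN //; exact/diff_derivable/df.
Qed.

Lemma Ck_scalef {V : normedModType R} k (a : E -> R) (f : E -> V) :
  Ck U k a -> Ck U k f -> Ck U k (fun u => a u *: f u).
Proof.
elim: k a f => [|k IH] a f /=.
- by move=> ca cf u uU; exact: continuousZ (ca u uU) (cf u uU).
- move=> [da dDa] [df dDf]; split=> [u Uu|v].
    exact: differentiable_scalef (da u Uu) (df u Uu).
  apply: (@Ck_eq_on _ _ (fun u => a u *: 'D_v f u + 'D_v a u *: f u)).
    by move=> b Ub; rewrite derive_scalef //; [exact: da | exact: df].
  apply: CkD; first exact: IH (CkW (conj da dDa)) (dDf v).
  exact: IH (dDa v) (CkW (conj df dDf)).
Qed.

Lemma Ck_sum {V : normedModType R} k m (F : 'I_m -> E -> V) :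
  (forall i, Ck U k (F i)) -> Ck U k (fun u => \sum_(i < m) F i u).
Proof.
move=> CkF; apply: Ck_eq_on (_ : Ck U k (\sum_(i < m) F i)) => [b _|].
  by rewrite fct_sumE.
by elim/big_ind: _ => //; [exact: Ck_cst | exact: CkD].
Qed.

Lemma Ck_coord k p q (g : E -> 'M[R]_(p, q)) i j :
  Ck U k g -> Ck U k (fun u => g u i j).
Proof.
elim: k g => [|k IH] g /=.
- move=> cg u uU; apply: (continuous_comp (g := fun M : 'M[R]_(p, q) => M i j)).
    exact: cg.
  exact: coord_continuous.
- move=> [dg dDg]; split=> [u Uu|v]; first exact/differentiable_coordf/dg.
  apply: Ck_eq_on (IH _ (dDg v)) => b Ub.
  by rewrite derive_coord //; exact/diff_derivable/dg.
Qed.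

Lemma Ck_dotv k (f g : E -> E) :
  Ck U k f -> Ck U k g -> Ck U k (fun u => dotv (f u) (g u)).
Proof.
move=> Ckf Ckg; apply: Ck_sum => i.
exact: Ck_scalef (Ck_coord 0 i Ckf) (Ck_coord 0 i Ckg).
Qed.

End SmoothOnOpen.

Section Dotv.
Variables (R : realType) (n : nat).
Local Notation E := 'rV[R]_n.

Lemma dotvC (a b : E) : dotv a b = dotv b a.
Proof. by apply: eq_bigr => i _; rewrite mulrC. Qed.

Let dotv_funE (w : E) (g : E -> E) :
  (fun b => dotv w (g b)) = \sum_(i < n) w 0 i \*: (fun b => g b 0 i).
Proof. by rewrite fct_sumE. Qed.

Lemma differentiable_dotvr (w : E) (g : E -> E) u :
  differentiable g u -> differentiable (fun b => dotv w (g b)) u.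
Proof.
move=> dg; rewrite dotv_funE; apply: differentiable_sum => i.
exact/differentiableZ/differentiable_coordf.
Qed.

Lemma derive_dotvr (w : E) (g : E -> E) u v :
  differentiable g u -> 'D_v (fun b => dotv w (g b)) u = dotv w ('D_v g u).
Proof.
move=> dg; have dgi i : derivable (fun b => g b 0 i) u v.
  exact/diff_derivable/differentiable_coordf.
rewrite dotv_funE derive_sum => [|i]; last exact: derivableZ.
by apply: eq_bigr => i _; rewrite deriveZ // derive_coord //; exact: diff_derivable.
Qed.

Lemma derive_sub_dotv (f : E -> R) (w : E) (g : E -> E) u v :
  differentiable f u -> differentiable g u ->
  'D_v (fun b => f b - dotv w (g b)) u = 'D_v f u - dotv w ('D_v g u).
Proof.
move=> df dg; rewrite (deriveB (g := fun b => dotv w (g b))) ?derive_dotvr //.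
- exact: diff_derivable.
- exact/diff_derivable/differentiable_dotvr.
Qed.

End Dotv.

Lemma smooth_on_differentiable {R : realType} {n : nat} {V : normedModType R}
    (U : set 'rV[R]_n) (f : 'rV[R]_n -> V) u :
  smooth_on U f -> U u -> differentiable f u.
Proof. by move=> sf Uu; have [df _] := sf 1%N; exact: df. Qed.

Lemma vactE {R : realType} {n : nat} {V : normedModType R} (X : vfield R n)
    (f : 'rV[R]_n -> V) u :
  differentiable f u -> vact X f u = \sum_(i < n) X u 0 i *: 'D_(delta_mx 0 i) f u.
Proof.
move=> df; rewrite /vact deriveE // {1}(row_sum_delta (X u)) linear_sum.
by apply: eq_bigr => i _; rewrite linearZ /= deriveE.
Qed.

Section VectorFieldAction.
Variables (R : realType) (n : nat) (U : set 'rV[R]_n) (X : vfield R n).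
Hypotheses (openU : open U) (smoothX : smooth_on U X).

Lemma smooth_on_vact {V : normedModType R} (f : 'rV[R]_n -> V) :
  smooth_on U f -> smooth_on U (vact X f).
Proof.
move=> sf k.
apply: (Ck_eq_on openU (f := fun u => \sum_(i < n) X u 0 i *: 'D_(delta_mx 0 i) f u)).
  by move=> b Ub; rewrite vactE //; exact: smooth_on_differentiable Ub.
apply: (Ck_sum openU) => i; apply: (Ck_scalef openU).
  exact: (Ck_coord openU (p := 1) (q := n) 0 i (smoothX k)).
by have [_ CkDf] := sf k.+1; exact: CkDf.
Qed.

Lemma smooth_on_iter_vact {V : normedModType R} k (f : 'rV[R]_n -> V) :
  smooth_on U f -> smooth_on U (iter k (vact X) f).
Proof. by move=> sf; elim: k => //= k; exact: smooth_on_vact. Qed.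

Lemma vact_eq_on {V : normedModType R} (f g : 'rV[R]_n -> V) u :
  (forall b, U b -> f b = g b) -> U u -> vact X f u = vact X g u.
Proof. by move=> fg Uu; apply: near_eq_derive; exact: eq_on_open_near fg Uu. Qed.

End VectorFieldAction.

Section LegendreChart.
Variables (R : realType) (n : nat) (U : set 'rV[R]_n).
Variables (x p : 'rV[R]_n -> 'rV[R]_n) (z : 'rV[R]_n -> R) (X : vfield R n).
Hypotheses (openU : open U) (smooth_x : smooth_on U x) (smooth_p : smooth_on U p).
Hypotheses (smooth_z : smooth_on U z) (smoothX : smooth_on U X).

Local Notation "X ^[ k ]" := (iter k (vact X)) (at level 2, format "X ^[ k ]").

Lemma smooth_on_zdual : smooth_on U (zdual x p z).
Proof. by move=> k; apply: (CkD openU) (CkN openU (smooth_z k)); exact: Ck_dotv. Qed.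

Lemma iter_vact_Dcan k a b : U b ->
  X^[k.+1] (Dcan x p z a) b = X^[k.+1] (zdual x p z) b - dotv (x a) (X^[k.+1] p b).
Proof.
elim: k b => [|k IH] b Ub;
  have dXk (V : normedModType R) (f : 'rV[R]_n -> V) j :
      smooth_on U f -> differentiable (X^[j] f) b
    by move=> sf; apply: smooth_on_differentiable Ub; exact: smooth_on_iter_vact.
- rewrite /= /vact (derive_sub_dotv (f := cst (z a) + zdual x p z)).
  + rewrite deriveD ?derive_cst ?add0r //.
    exact/diff_derivable/(dXk _ _ 0%N)/smooth_on_zdual.
  + exact/differentiableD/(dXk _ _ 0%N)/smooth_on_zdual.
  + exact: (dXk _ _ 0%N).
rewrite iterS (vact_eq_on X openU IH Ub) /vact derive_sub_dotv //.
- exact/dXk/smooth_on_zdual.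
- exact: dXk.
Qed.

Lemma nablaE'_iter_fst k u :
  (iter k (nablaE' x X) (Phi'X X x p z) u).1 = X^[k.+1] p u.
Proof. by elim: k u => // k IH u; rewrite iterS /= /nablaE' /= (funext IH). Qed.

Lemma tau_nablaE'_iter k r : U r ->
  tau (PhiX X x z r) (iter k (nablaE' x X) (Phi'X X x p z) r)
    = - 2^-1 * vact X (fun a => X^[k.+1] (Dcan x p z a) r) r.
Proof.
move=> Ur; rewrite /tau nablaE'_iter_fst /=.
have -> : (fun a => X^[k.+1] (Dcan x p z a) r)
    = fun a => X^[k.+1] (zdual x p z) r - dotv (X^[k.+1] p r) (x a).
  by apply/funext => a; rewrite iter_vact_Dcan // dotvC.
rewrite /vact derive_sub_dotv ?derive_cst ?sub0r ?mulrN ?mulNr ?opprK 1?dotvC //.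
exact: smooth_on_differentiable Ur.
Qed.

End LegendreChart.

Theorem corollary4p3 (R : realType) (n : nat) (U : set 'rV[R]_n)
    (x p : 'rV[R]_n -> 'rV[R]_n) (z : 'rV[R]_n -> R) (X : vfield R n) :
  legendre_param U x p z -> smooth_on U X ->
  forall r, U r ->
    tau (PhiX X x z r) (nablaE' x X (Phi'X X x p z) r)
      = - 2^-1 * D_X_XX X (Dcan x p z) r /\
    tau (PhiX X x z r) (nablaE' x X (nablaE' x X (Phi'X X x p z)) r)
      = - 2^-1 * D_X_XXX X (Dcan x p z) r.
Proof.
move=> [openU [sx sp] sz _ _] sX r Ur.
have tau_D := tau_nablaE'_iter openU sx sp sz sX.
by split; [exact: (tau_D 1%N) | exact: (tau_D 2%N)].
Qed.
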